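(* Consider a closed-loop system with the setting described in the context, and let $\widetilde{\mathbf{R}}_{[0,\tau]}$ be the set of states represented by the output of the reachability procedure described in the context (run with sound validated simulation and sound abstract transformers, starting from a finite collection of symbolic states $\widetilde{\mathbf{R}}_0$ whose represented set contains $\mathbf{I}$). Then the procedure yields a sound approximation of the non-bottom reachable states, i.e. $$\widetilde{\mathbf{R}}_{[0,\tau]} \supseteq \mathbf{R}_{[0,\tau]} \setminus \{\bot\}.$$
   Context: Closed-loop system. A plant has state $\mathbf{s}(t)\in\mathbb{R}^l$ evolving according to the ODE $\mathbf{s}'(t)=f(t,\mathbf{s}(t),\mathbf{u}(t))$, where $f:\mathbb{R}\times\mathbb{R}^l\times\mathbb{R}^d\to\mathbb{R}^l$ is continuous in $t$ and $\mathbf{u}$ and uniformly Lipschitz continuous in $\mathbf{s}$; $\mathbf{s}$ is required to be continuous and to satisfy the ODE on each open interval $]jT,(j+1)T[$. A controller is executed periodically with period $T>0$. The command signal $\mathbf{u}(t)$ takes values in a finite set $\mathbf{U}=\{\mathbf{u}^{(1)},\dots,\mathbf{u}^{(P)}\}\subset\mathbb{R}^d$ and is piecewise constant: $\mathbf{u}(t)=\mathbf{u}_0$ on $[0,T[$ and $\mathbf{u}(t)=\mathbf{u}_{j+1}$ on $[(j+1)T,(j+2)T[$. The controller uses a finite collection $\mathbf{N}$ of (already trained) ReLU feedforward neural networks, a selection map $\lambda:\mathbf{U}\to\mathbf{N}$, and deterministic functions $\mathrm{Pre}:\mathbb{R}^l\to\mathbb{R}^m$ and $\mathrm{Post}:\mathbb{R}^p\to\mathbf{U}$;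 writing $F_N:\mathbb{R}^m\to\mathbb{R}^p$ for the function computed by network $N$, the $j$-th execution computes $\mathbf{u}_{j+1}=\mathrm{Post}(F_{\lambda(\mathbf{u}_j)}(\mathrm{Pre}(\mathbf{s}(jT))))$. The state of the closed loop is $\phi(t)=(\mathbf{s}(t),\mathbf{u}(t))$, with initial state $\phi_0=(\mathbf{s}_0,\mathbf{u}_0)$ in a set $\mathbf{I}\subseteq\mathbb{R}^l\times\mathbf{U}$. A target set $\mathbf{T}\subset\mathbb{R}^l\times\mathbf{U}$ is given: if $t_{\mathrm{end}}$ is such that $\phi(t)\notin\mathbf{T}$ for all $t<t_{\mathrm{end}}$ and $\phi(t_{\mathrm{end}})\in\mathbf{T}$, then by definition $\phi(t)=\bot$ (a symbolic ''terminated'' state) for all $t\in\,]t_{\mathrm{end}},\tau]$. Here $\tau=qT$ with $q\in\mathbb{N}$. For each $\phi_0\in\mathbf{I}$ this determines a unique function $\phi_{\phi_0}:[0,\tau]\to(\mathbb{R}^l\times\mathbf{U})\cup\{\bot\}$. The reachable states at time $t$ are $\mathbf{R}_t=\{\phi_{\phi_0}(t)\mid \phi_0\in\mathbf{I}\}$, and $\mathbf{R}_{[0,\tau]}=\bigcup_{t\in[0,\tau]}\mathbf{R}_t$. Symbolic states. A symbolic state is a pair $([\mathbf{s}],\mathbf{u})$ with $[\mathbf{s}]\subset\mathbb{R}^l$ a box (product of $l$ intervals) and $\mathbf{u}\in\mathbf{U}$; it represents $\{(\mathbf{s},\mathbf{u})\mid \mathbf{s}\in[\mathbf{s}]\}$.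 A symbolic set is a finite collection of symbolic states, representing the union of the represented sets; set relations ($\in$, $\subset$, $\supseteq$) are applied to the represented sets. Sound tools. Validated simulation: given an interval $[t_1,t_2]$, a box $[\mathbf{s}_{t_1}]$ and a constant command $\mathbf{u}$, it returns boxes $[\mathbf{s}_{[t_1,t_2]}]$ and $[\mathbf{s}_{t_2}]$ such that every solution of $\mathbf{s}'=f(t,\mathbf{s},\mathbf{u})$ on $[t_1,t_2]$ with $\mathbf{s}(t_1)\in[\mathbf{s}_{t_1}]$ satisfies $\mathbf{s}(t)\in[\mathbf{s}_{[t_1,t_2]}]$ for all $t\in[t_1,t_2]$ and $\mathbf{s}(t_2)\in[\mathbf{s}_{t_2}]$. Abstract transformers $\mathrm{Pre}^\#$, $F_N^\#$ ($N\in\mathbf{N}$) map boxes to boxes with $\mathrm{Pre}^\#([\mathbf{s}])\supseteq\mathrm{Pre}([\mathbf{s}])$, $F_N^\#([\mathbf{x}])\supseteq F_N([\mathbf{x}])$, and $\mathrm{Post}^\#$ maps a box $[\mathbf{y}]$ to a finite subset of $\mathbf{U}$ containing $\mathrm{Post}([\mathbf{y}])$. Procedure. Start from a finite symbolic set $\widetilde{\mathbf{R}}_0$ whose represented set contains $\mathbf{I}$. For $j=0,\dots,q-1$: initialize $\widetilde{\mathbf{R}}_{[j[}=\widetilde{\mathbf{R}}_{j+1}=\emptyset$; for each symbolic state $([\mathbf{s}_j]_k,\mathbf{u}_{j,k})\in\widetilde{\mathbf{R}}_j$ that is not contained in $\mathbf{T}$: (1) apply validated simulation on $[jT,(j+1)T]$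 with initial box $[\mathbf{s}_j]_k$ and constant command $\mathbf{u}_{j,k}$, obtaining $[\mathbf{s}_{[j[}]_k:=[\mathbf{s}_{[jT,(j+1)T]}]$ and $[\mathbf{s}_{j+1}]_k:=[\mathbf{s}_{t=(j+1)T}]$; add $([\mathbf{s}_{[j[}]_k,\mathbf{u}_{j,k})$ to $\widetilde{\mathbf{R}}_{[j[}$; (2) with $N=\lambda(\mathbf{u}_{j,k})$, compute $\{\mathbf{u}'_1,\dots,\mathbf{u}'_i\}=\mathrm{Post}^\#(F_N^\#(\mathrm{Pre}^\#([\mathbf{s}_j]_k)))$ and add $([\mathbf{s}_{j+1}]_k,\mathbf{u}'_1),\dots,([\mathbf{s}_{j+1}]_k,\mathbf{u}'_i)$ to $\widetilde{\mathbf{R}}_{j+1}$. Symbolic states contained in $\mathbf{T}$ are not propagated (so if some $\widetilde{\mathbf{R}}_{j}$ has no state to propagate, all later sets are empty). The output is $\widetilde{\mathbf{R}}_{[0,\tau]}=\bigcup_{0\le j<q}\widetilde{\mathbf{R}}_{[j[}\cup\bigcup_{0\le j\le q}\widetilde{\mathbf{R}}_j$ (equivalently, the union up to the last index $j_{\mathrm{end}}$ at which states remain). *)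

From Stdlib Require List.
From HB Require Import structures.
From mathcomp Require Import all_boot all_order all_algebra.
From mathcomp Require Import all_classical all_reals all_analysis.
Set Implicit Arguments. Unset Strict Implicit. Unset Printing Implicit Defensive.
Import Order.TTheory GRing.Theory Num.Theory.
Import numFieldNormedType.Exports.
Local Open Scope ring_scope.
Local Open Scope classical_set_scope.

Section Defs.
Variable R : realType.

Definition box (n : nat) := 'I_n -> interval R.
Definition in_box (n : nat) (b : box n) (x : 'rV[R]_n) : Prop :=
  forall i : 'I_n, x ord0 i \in b i.

Inductive relu_net : nat -> nat -> Type :=
| NetOut (a b : nat) (W : 'M[R]_(a, b)) (c : 'rV[R]_b) : relu_net a b
| NetHid (a k b : nat) (W : 'M[R]_(a, k)) (c : 'rV[R]_k) (rest : relu_net k b)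
    : relu_net a b.

Definition relu (n : nat) (x : 'rV[R]_n) : 'rV[R]_n := map_mx (fun z => Num.max z 0) x.

Fixpoint net_eval (a b : nat) (N : relu_net a b) : 'rV[R]_a -> 'rV[R]_b :=
  match N in relu_net a b return 'rV[R]_a -> 'rV[R]_b with
  | NetOut _ _ W c => fun x => x *m W + c
  | NetHid _ _ _ W c rest => fun x => net_eval rest (relu (x *m W + c))
  end.

Definition ode_solution (l d : nat) (f : R -> 'rV[R]_l -> 'rV[R]_d -> 'rV[R]_l)
  (t1 t2 : R) (u : 'rV[R]_d) (s : R -> 'rV[R]_l) : Prop :=
  {within `[t1, t2], continuous s} /\
  (forall t, t1 < t < t2 -> is_derive t 1 s (f t (s t) u)).

(* Closed-loop trajectory on [0, q T]: state s, command sequence us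
   (u(t) = us j on [jT, (j+1)T[, and u(qT) = us q). *)
Definition closed_loop (l d m p : nat)
  (f : R -> 'rV[R]_l -> 'rV[R]_d -> 'rV[R]_l) (T : R) (q : nat)
  (Pre : 'rV[R]_l -> 'rV[R]_m) (Post : 'rV[R]_p -> 'rV[R]_d)
  (lam : 'rV[R]_d -> relu_net m p)
  (s : R -> 'rV[R]_l) (us : nat -> 'rV[R]_d) : Prop :=
  {within `[0, q%:R * T], continuous s} /\
  (forall j : nat, (j < q)%N -> forall t, j%:R * T < t < j.+1%:R * T ->
      is_derive t 1 s (f t (s t) (us j))) /\
  (forall j : nat, (j < q)%N ->
      us j.+1 = Post (net_eval (lam (us j)) (Pre (s (j%:R * T))))).

(* Non-bottom reachable states R_[0,tau] \ {bot}, tau = q T: the closed-loop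
   state (s(t), u(t)) at a time t in [0, tau] such that the execution has not
   been terminated before t, i.e. phi(t') is not in the target for all t' < t. *)
Definition reach_nonbot (l d m p : nat)
  (f : R -> 'rV[R]_l -> 'rV[R]_d -> 'rV[R]_l) (T : R) (q : nat)
  (Pre : 'rV[R]_l -> 'rV[R]_m) (Post : 'rV[R]_p -> 'rV[R]_d)
  (lam : 'rV[R]_d -> relu_net m p)
  (Init Targ : 'rV[R]_l -> 'rV[R]_d -> Prop)
  (x : 'rV[R]_l) (u : 'rV[R]_d) : Prop :=
  exists (s : R -> 'rV[R]_l) (us : nat -> 'rV[R]_d),
    Init (s 0) (us 0%N) /\ closed_loop f T q Pre Post lam s us /\
    exists (t : R) (j : nat),
      [/\ 0 <= t <= q%:R * T, j%:R * T <= t < j.+1%:R * T,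
          x = s t, u = us j &
          forall (t' : R) (j' : nat), 0 <= t' < t ->
            j'%:R * T <= t' < j'.+1%:R * T -> ~ Targ (s t') (us j')].

Definition symstate (l d : nat) := (box l * 'rV[R]_d)%type.

Definition sym_in_target (l d : nat) (Targ : 'rV[R]_l -> 'rV[R]_d -> Prop)
  (x : symstate l d) : Prop :=
  forall s, in_box x.1 s -> Targ s x.2.

Definition propagated (l d : nat) (Targ : 'rV[R]_l -> 'rV[R]_d -> Prop)
  (Rj : seq (symstate l d)) : seq (symstate l d) :=
  [seq x <- Rj | ~~ `[< sym_in_target Targ x >]].

Section Procedure.
Variables (l d m p : nat) (T : R)
  (lam : 'rV[R]_d -> relu_net m p)
  (Targ : 'rV[R]_l -> 'rV[R]_d -> Prop)
  (sim : R -> R -> box l -> 'rV[R]_d -> box l * box l)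
  (Presh : box l -> box m) (Fsh : relu_net m p -> box m -> box p)
  (Postsh : box p -> seq 'rV[R]_d).

Definition proc_interval (j : nat) (Rj : seq (symstate l d)) : seq (symstate l d) :=
  [seq ((sim (j%:R * T) (j.+1%:R * T) x.1 x.2).1, x.2) | x <- propagated Targ Rj].

Definition proc_next (j : nat) (Rj : seq (symstate l d)) : seq (symstate l d) :=
  flatten [seq [seq ((sim (j%:R * T) (j.+1%:R * T) x.1 x.2).2, u')
               | u' <- Postsh (Fsh (lam x.2) (Presh x.1))]
          | x <- propagated Targ Rj].

Fixpoint proc_seq (R0 : seq (symstate l d)) (j : nat) : seq (symstate l d) :=
  match j with
  | 0%N => R0
  | j'.+1 => proc_next j' (proc_seq R0 j')
  end.

Definition proc_output (R0 : seq (symstate l d)) (q : nat)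
  (x : 'rV[R]_l) (u : 'rV[R]_d) : Prop :=
  exists j : nat,
    ((j < q)%N /\ exists b, Stdlib.Lists.List.In (b, u) (proc_interval j (proc_seq R0 j)) /\ in_box b x)
    \/ ((j <= q)%N /\ exists b, Stdlib.Lists.List.In (b, u) (proc_seq R0 j) /\ in_box b x).
End Procedure.

End Defs.

(* The invariant is that the sampled closed-loop state (s(jT), u_j) lies in
   R~_j as long as the run has not terminated before jT. A symbolic state
   containing it is then not contained in the target, hence propagated:
   validated simulation encloses s on [jT, (j+1)T] and at (j+1)T, and the
   abstract transformers produce u_(j+1) among its successor commands. A
   reachable state at a time t in [jT, (j+1)T[ therefore lies in R~_j if
   t = jT and in R~_[j[ otherwise. *)
From Stdlib Require List.
From HB Require Import structures.
From mathcomp Require Import all_boot all_order all_algebra.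
From mathcomp Require Import all_classical all_reals all_analysis.
Set Implicit Arguments. Unset Strict Implicit. Unset Printing Implicit Defensive.
Import Order.TTheory GRing.Theory Num.Theory.
Import numFieldNormedType.Exports.
Local Open Scope ring_scope.
Local Open Scope classical_set_scope.

Lemma mem_In (A : eqType) (x : A) (s : seq A) : x \in s -> List.In x s.
Proof.
elim: s => //= y s IHs; rewrite in_cons => /orP[/eqP->|/IHs xs]; by [left | right].
Qed.

Lemma sample_time_lt (R : numDomainType) (T : R) (i j : nat) :
  0 < T -> (i%:R * T < j%:R * T) = (i < j)%N.
Proof. by move=> T_gt0; rewrite ltr_pM2r // ltr_nat. Qed.

Lemma sample_time_le (R : numDomainType) (T : R) (i j : nat) :
  0 < T -> (i%:R * T <= j%:R * T) = (i <= j)%N.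
Proof. by move=> T_gt0; rewrite ler_pM2r // ler_nat. Qed.

Section Procedure.
Variables (R : realType) (l d m p : nat) (T : R)
  (lam : 'rV[R]_d -> relu_net R m p)
  (Targ : 'rV[R]_l -> 'rV[R]_d -> Prop)
  (sim : R -> R -> box R l -> 'rV[R]_d -> box R l * box R l)
  (Presh : box R l -> box R m) (Fsh : relu_net R m p -> box R m -> box R p)
  (Postsh : box R p -> seq 'rV[R]_d).

Lemma In_propagated (Rj : seq (symstate R l d)) (b : box R l) x u :
  List.In (b, u) Rj -> in_box b x -> ~ Targ x u ->
  List.In (b, u) (propagated Targ Rj).
Proof.
move=> bRj bx Txu; apply/List.filter_In; split=> //.
by apply/negP => /asboolP/(_ x bx).
Qed.

Lemma In_proc_interval j (Rj : seq (symstate R l d)) (z : symstate R l d) :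
  List.In z (propagated Targ Rj) ->
  List.In ((sim (j%:R * T) (j.+1%:R * T) z.1 z.2).1, z.2)
    (proc_interval T Targ sim j Rj).
Proof. exact: List.in_map. Qed.

Lemma In_proc_next j (Rj : seq (symstate R l d)) (z : symstate R l d) u :
  List.In z (propagated Targ Rj) ->
  List.In u (Postsh (Fsh (lam z.2) (Presh z.1))) ->
  List.In ((sim (j%:R * T) (j.+1%:R * T) z.1 z.2).2, u)
    (proc_next T lam Targ sim Presh Fsh Postsh j Rj).
Proof.
move=> zRj uPost; apply/List.in_concat; eexists; split.
  exact: List.in_map zRj.
exact: List.in_map.
Qed.

End Procedure.

Section ClosedLoop.
Variables (R : realType) (l d m p : nat)
  (f : R -> 'rV[R]_l -> 'rV[R]_d -> 'rV[R]_l) (T : R) (q : nat)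
  (lam : 'rV[R]_d -> relu_net R m p)
  (Pre : 'rV[R]_l -> 'rV[R]_m) (Post : 'rV[R]_p -> 'rV[R]_d)
  (s : R -> 'rV[R]_l) (us : nat -> 'rV[R]_d).
Hypothesis T_gt0 : 0 < T.
Hypothesis loop : closed_loop f T q Pre Post lam s us.

Lemma closed_loop_ode_solution j : (j < q)%N ->
  ode_solution f (j%:R * T) (j.+1%:R * T) (us j) s.
Proof.
case: loop => s_cont [s_ode _] jq; split; last exact: s_ode.
apply: continuous_subspaceW s_cont => t /=; rewrite !in_itv /= => /andP[jt tj].
rewrite (le_trans tj) ?sample_time_le // andbT.
by apply: le_trans jt; rewrite mulr_ge0 // ltW.
Qed.

Lemma closed_loop_commands_in (U : seq 'rV[R]_d) :
  us 0 \in U -> (forall y, Post y \in U) -> forall j, (j <= q)%N -> us j \in U.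
Proof. by case: loop => _ [_ us_next] us0U PostU [|j] // jq; rewrite us_next. Qed.

End ClosedLoop.

Section Soundness.
Variables (R : realType) (l d m p : nat)
  (f : R -> 'rV[R]_l -> 'rV[R]_d -> 'rV[R]_l) (T : R) (q : nat)
  (U : seq 'rV[R]_d) (lam : 'rV[R]_d -> relu_net R m p)
  (Pre : 'rV[R]_l -> 'rV[R]_m) (Post : 'rV[R]_p -> 'rV[R]_d)
  (Targ : 'rV[R]_l -> 'rV[R]_d -> Prop)
  (sim : R -> R -> box R l -> 'rV[R]_d -> box R l * box R l)
  (Presh : box R l -> box R m) (Fsh : relu_net R m p -> box R m -> box R p)
  (Postsh : box R p -> seq 'rV[R]_d) (R0 : seq (symstate R l d))
  (s : R -> 'rV[R]_l) (us : nat -> 'rV[R]_d).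
Hypothesis T_gt0 : 0 < T.
Hypothesis sim_sound : forall (t1 t2 : R) (b : box R l) (u : 'rV[R]_d)
    (s : R -> 'rV[R]_l),
  t1 <= t2 -> u \in U -> ode_solution f t1 t2 u s -> in_box b (s t1) ->
  (forall t, t1 <= t <= t2 -> in_box (sim t1 t2 b u).1 (s t)) /\
  in_box (sim t1 t2 b u).2 (s t2).
Hypothesis Presh_sound : forall (b : box R l) x,
  in_box b x -> in_box (Presh b) (Pre x).
Hypothesis Fsh_sound : forall (u : 'rV[R]_d) (b : box R m) y,
  u \in U -> in_box b y -> in_box (Fsh (lam u) b) (net_eval (lam u) y).
Hypothesis Postsh_sound : forall (b : box R p) y, in_box b y -> Post y \in Postsh b.
Hypothesis loop : closed_loop f T q Pre Post lam s us.
Hypothesis us_in : forall j, (j <= q)%N -> us j \in U.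
Hypothesis R0_covers : exists b, List.In (b, us 0) R0 /\ in_box b (s 0).

Local Notation Rsym := (proc_seq T lam Targ sim Presh Fsh Postsh R0).

Lemma sim_sound_on_period j b : (j < q)%N -> in_box b (s (j%:R * T)) ->
  (forall t, j%:R * T <= t <= j.+1%:R * T ->
     in_box (sim (j%:R * T) (j.+1%:R * T) b (us j)).1 (s t)) /\
  in_box (sim (j%:R * T) (j.+1%:R * T) b (us j)).2 (s (j.+1%:R * T)).
Proof.
move=> jq bs; apply: sim_sound bs; first by rewrite sample_time_le.
  exact: us_in (ltnW jq).
exact (closed_loop_ode_solution T_gt0 loop jq).
Qed.

Lemma proc_seq_sound k : (k <= q)%N ->
  (forall i, (i < k)%N -> ~ Targ (s (i%:R * T)) (us i)) ->
  exists b, List.In (b, us k) (Rsym k) /\ in_box b (s (k%:R * T)).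
Proof.
elim: k => [|k IHk] kq alive; first by rewrite mul0r.
have [b [bRk bs]] := IHk (ltnW kq) (fun i ik => alive i (ltnW ik)).
have b_prop := In_propagated bRk bs (alive k (ltnSn k)).
have [_ sim_end] := sim_sound_on_period kq bs.
exists (sim (k%:R * T) (k.+1%:R * T) b (us k)).2; split=> //.
case: loop => _ [_ us_next]; rewrite /= us_next //.
apply: In_proc_next b_prop _; apply/mem_In/Postsh_sound/Fsh_sound.
  exact: us_in (ltnW kq).
exact: Presh_sound.
Qed.

Lemma proc_interval_sound j t : (j < q)%N ->
  (forall i, (i <= j)%N -> ~ Targ (s (i%:R * T)) (us i)) ->
  j%:R * T <= t <= j.+1%:R * T ->
  exists b, List.In (b, us j) (proc_interval T Targ sim j (Rsym j)) /\
            in_box b (s t).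
Proof.
move=> jq alive jt.
have [b [bRj bs]] := proc_seq_sound (ltnW jq) (fun i ij => alive i (ltnW ij)).
have b_prop := In_propagated bRj bs (alive j (leqnn j)).
have [sim_enc _] := sim_sound_on_period jq bs.
exists (sim (j%:R * T) (j.+1%:R * T) b (us j)).1; split; last exact: sim_enc.
exact: In_proc_interval b_prop.
Qed.

End Soundness.

Theorem theorem1 (R : realType) (l d m p : nat)
  (f : R -> 'rV[R]_l -> 'rV[R]_d -> 'rV[R]_l)
  (T : R) (q : nat)
  (U : seq 'rV[R]_d)
  (lam : 'rV[R]_d -> relu_net R m p)
  (Pre : 'rV[R]_l -> 'rV[R]_m) (Post : 'rV[R]_p -> 'rV[R]_d)
  (Init Targ : 'rV[R]_l -> 'rV[R]_d -> Prop)
  (sim : R -> R -> box R l -> 'rV[R]_d -> box R l * box R l)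
  (Presh : box R l -> box R m) (Fsh : relu_net R m p -> box R m -> box R p)
  (Postsh : box R p -> seq 'rV[R]_d)
  (R0 : seq (symstate R l d)) :
  (* f continuous in (t, u) and uniformly Lipschitz in s *)
  (forall x : 'rV[R]_l, continuous (fun tu : R * 'rV[R]_d => f tu.1 x tu.2)) ->
  (exists L : R, forall (t : R) (x y : 'rV[R]_l) (u : 'rV[R]_d),
      `|f t x u - f t y u| <= L * `|x - y|) ->
  0 < T ->
  (* Post takes values in U; I and the target are subsets of R^l x U *)
  (forall y, Post y \in U) ->
  (forall x u, Init x u -> u \in U) ->
  (forall x u, Targ x u -> u \in U) ->
  (* soundness of validated simulation *)
  (forall (t1 t2 : R) (b : box R l) (u : 'rV[R]_d) (s : R -> 'rV[R]_l),
      t1 <= t2 -> u \in U -> ode_solution f t1 t2 u s -> in_box b (s t1) ->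
      (forall t, t1 <= t <= t2 -> in_box (sim t1 t2 b u).1 (s t)) /\
      in_box (sim t1 t2 b u).2 (s t2)) ->
  (* soundness of the abstract transformers *)
  (forall (b : box R l) x, in_box b x -> in_box (Presh b) (Pre x)) ->
  (forall (u : 'rV[R]_d) (b : box R m) y, u \in U -> in_box b y ->
      in_box (Fsh (lam u) b) (net_eval (lam u) y)) ->
  (forall (b : box R p), {subset Postsh b <= U}) ->
  (forall (b : box R p) y, in_box b y -> Post y \in Postsh b) ->
  (* the initial symbolic set contains I *)
  (forall x u, Init x u -> exists b, Stdlib.Lists.List.In (b, u) R0 /\ in_box b x) ->
  forall x u, reach_nonbot f T q Pre Post lam Init Targ x u ->
    proc_output T lam Targ sim Presh Fsh Postsh R0 q x u.
Proof.
move=> _ _ T_gt0 PostU InitU _ sim_sound Presh_sound Fsh_sound _ Postsh_sound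
  R0_covers x u [s [us [init [loop [t [j [/andP[t_ge0 t_le] /andP[jt tj] -> -> alive]]]]]]].
have us_in := closed_loop_commands_in loop (InitU _ _ init) PostU.
have alive_sampled i : i%:R * T < t -> ~ Targ (s (i%:R * T)) (us i).
  move=> it; apply: alive; first by rewrite it mulr_ge0 // ltW.
  by rewrite lexx /= (sample_time_lt _ _ T_gt0).
have R0_s := R0_covers _ _ init.
have jq : (j <= q)%N by rewrite -(sample_time_le _ _ T_gt0) (le_trans jt).
exists j; have [tj_eq | tj_neq] := eqVneq t (j%:R * T).
  right; split=> //; rewrite tj_eq.
  apply: (proc_seq_sound T_gt0 sim_sound Presh_sound Fsh_sound Postsh_sound
    loop us_in R0_s jq) => i ij.
  by move: ij; rewrite -(sample_time_lt _ _ T_gt0) -tj_eq; apply: alive_sampled.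
have jt_lt : j%:R * T < t by rewrite lt_neqAle eq_sym tj_neq.
have jq' : (j < q)%N by rewrite -(sample_time_lt _ _ T_gt0) (lt_le_trans jt_lt).
left; split=> //.
apply: (proc_interval_sound T_gt0 sim_sound Presh_sound Fsh_sound Postsh_sound
  loop us_in R0_s jq'); last by rewrite jt ltW.
move=> i ij; apply: alive_sampled; apply: le_lt_trans jt_lt.
by rewrite (sample_time_le _ _ T_gt0).
Qed.
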